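(* For all types $A$ and $B$, if $A \equiv B$, then $A \simeq B$.
   Context: Types and rows share one grammar: $A,B,C,\rho ::= X \mid \alpha \mid \star \mid \iota \mid A\to B \mid \forall X{:}K.\,A \mid [\rho] \mid \langle\rho\rangle \mid \cdot \mid \ell{:}A;\rho$, where $X$ ranges over type variables (bound by $\forall$), $\alpha$ over type names, $\star$ is the dynamic type (also serving as the dynamic row), $\iota$ over base types, $[\rho]$ and $\langle\rho\rangle$ are record and variant types, $\cdot$ is the empty row, $\ell$ ranges over labels, and $K\in\{\mathsf T,\mathsf R\}$ is a kind. Types are identified up to renaming of bound variables; $\mathit{ftv}(A)$ is the set of free type variables. Row matching $\rho \triangleright_\ell A,\rho'$ is defined by: $(\ell{:}A;\rho)\triangleright_\ell A,\rho$; if $\ell'\neq\ell$ and $\rho\triangleright_\ell A,\rho'$ then $(\ell'{:}B;\rho)\triangleright_\ell A,(\ell'{:}B;\rho')$; and $\star\triangleright_\ell \star,\star$. $\mathbf{QPoly}(A)$ holds iff $A$ is not of the form $\forall X{:}K.\,B$ and $\star$ occurs in $A$. Type equivalence $\equiv$ is the least equivalence relation that is a congruence for $\to$, $\forall X{:}K.\,-$, $[-]$, $\langle-\rangle$ and $\ell{:}-;-$, and contains $\ell{:}A;\ell'{:}B;\rho \equiv \ell'{:}B;\ell{:}A;\rho$ whenever $\ell\neq\ell'$. Consistency $\simeq$ is defined inductively: $A\simeq A$; $\star\simeq A$; $A\simeq\star$; $A_1\to A_2\simeq B_1\to B_2$ if $A_1\simeq B_1$ and $A_2\simeq B_2$;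 $\forall X{:}K.A\simeq\forall X{:}K.B$ if $A\simeq B$; $\forall X{:}K.A\simeq B$ if $\mathbf{QPoly}(B)$, $X\notin\mathit{ftv}(B)$ and $A\simeq B$; $A\simeq\forall X{:}K.B$ if $\mathbf{QPoly}(A)$, $X\notin\mathit{ftv}(A)$ and $A\simeq B$; $[\rho_1]\simeq[\rho_2]$ and $\langle\rho_1\rangle\simeq\langle\rho_2\rangle$ if $\rho_1\simeq\rho_2$; $\ell{:}A;\rho_1\simeq B$ if $B\triangleright_\ell B',\rho_2$, $A\simeq B'$ and $\rho_1\simeq\rho_2$; $A\simeq \ell{:}B;\rho_2$ if $A\triangleright_\ell A',\rho_1$, $A'\simeq B$ and $\rho_1\simeq\rho_2$. *)

(* Types/rows of the gradual row-polymorphic calculus,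
   with type variables X in de Bruijn representation (so that types are
   identified up to renaming of bound variables syntactically). *)
From Stdlib Require Import Arith.

Inductive kind : Type := KT | KR.

Definition label := nat.
Definition tname := nat.
Definition base := nat.

Inductive ty : Type :=
  | TVar : nat -> ty
  | TName : tname -> ty
  | TDyn : ty                       (* star (dynamic type / dynamic row) *)
  | TBase : base -> ty
  | TArr : ty -> ty -> ty
  | TForall : kind -> ty -> ty      (* forall X:K. A  (binds index 0) *)
  | TRec : ty -> ty
  | TVariant : ty -> ty
  | TEmpty : ty
  | TExt : label -> ty -> ty -> ty.

Fixpoint shift (c : nat) (A : ty) : ty :=
  match A with
  | TVar n => if c <=? n then TVar (S n) else TVar n
  | TName a => TName a
  | TDyn => TDyn
  | TBase i => TBase i
  | TArr A1 A2 => TArr (shift c A1) (shift c A2)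
  | TForall K A1 => TForall K (shift (S c) A1)
  | TRec r => TRec (shift c r)
  | TVariant r => TVariant (shift c r)
  | TEmpty => TEmpty
  | TExt l A1 r => TExt l (shift c A1) (shift c r)
  end.

Fixpoint in_ftv (n : nat) (A : ty) : Prop :=
  match A with
  | TVar m => m = n
  | TArr A1 A2 => in_ftv n A1 \/ in_ftv n A2
  | TForall _ A1 => in_ftv (S n) A1
  | TRec r | TVariant r => in_ftv n r
  | TExt _ A1 r => in_ftv n A1 \/ in_ftv n r
  | _ => False
  end.

Fixpoint dyn_occurs (A : ty) : Prop :=
  match A with
  | TDyn => True
  | TArr A1 A2 => dyn_occurs A1 \/ dyn_occurs A2
  | TForall _ A1 => dyn_occurs A1
  | TRec r | TVariant r => dyn_occurs r
  | TExt _ A1 r => dyn_occurs A1 \/ dyn_occurs r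
  | _ => False
  end.

Definition is_forall (A : ty) : Prop :=
  match A with TForall _ _ => True | _ => False end.

Definition QPoly (A : ty) : Prop := ~ is_forall A /\ dyn_occurs A.

Inductive row_match : ty -> label -> ty -> ty -> Prop :=
  | RM_here : forall l A r, row_match (TExt l A r) l A r
  | RM_there : forall l l' A B r r',
      l' <> l -> row_match r l A r' ->
      row_match (TExt l' B r) l A (TExt l' B r')
  | RM_dyn : forall l, row_match TDyn l TDyn TDyn.

Inductive ty_equiv : ty -> ty -> Prop :=
  | E_refl : forall A, ty_equiv A A
  | E_sym : forall A B, ty_equiv A B -> ty_equiv B A
  | E_trans : forall A B C, ty_equiv A B -> ty_equiv B C -> ty_equiv A C
  | E_arr : forall A1 A2 B1 B2,
      ty_equiv A1 B1 -> ty_equiv A2 B2 -> ty_equiv (TArr A1 A2) (TArr B1 B2)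
  | E_forall : forall K A B, ty_equiv A B -> ty_equiv (TForall K A) (TForall K B)
  | E_rec : forall r1 r2, ty_equiv r1 r2 -> ty_equiv (TRec r1) (TRec r2)
  | E_variant : forall r1 r2, ty_equiv r1 r2 -> ty_equiv (TVariant r1) (TVariant r2)
  | E_ext : forall l A B r1 r2,
      ty_equiv A B -> ty_equiv r1 r2 -> ty_equiv (TExt l A r1) (TExt l B r2)
  | E_swap : forall l l' A B r,
      l <> l' -> ty_equiv (TExt l A (TExt l' B r)) (TExt l' B (TExt l A r)).

(* In the forall-vs-QPoly rules, the named rule
   "forall X:K.A ~ B if QPoly B, X notin ftv(B), A ~ B" becomes, in
   de Bruijn form, "A ~ shift 0 B" (B weakened under the binder; the
   freshness side condition is then automatic). *)
Inductive consistent : ty -> ty -> Prop :=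
  | C_refl : forall A, consistent A A
  | C_dynL : forall A, consistent TDyn A
  | C_dynR : forall A, consistent A TDyn
  | C_arr : forall A1 A2 B1 B2,
      consistent A1 B1 -> consistent A2 B2 ->
      consistent (TArr A1 A2) (TArr B1 B2)
  | C_forall : forall K A B, consistent A B ->
      consistent (TForall K A) (TForall K B)
  | C_forallL : forall K A B, QPoly B -> consistent A (shift 0 B) ->
      consistent (TForall K A) B
  | C_forallR : forall K A B, QPoly A -> consistent (shift 0 A) B ->
      consistent A (TForall K B)
  | C_rec : forall r1 r2, consistent r1 r2 -> consistent (TRec r1) (TRec r2)
  | C_variant : forall r1 r2, consistent r1 r2 ->
      consistent (TVariant r1) (TVariant r2)
  | C_extL : forall l A r1 B B' r2,
      row_match B l B' r2 -> consistent A B' -> consistent r1 r2 ->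
      consistent (TExt l A r1) B
  | C_extR : forall l A A' r1 B r2,
      row_match A l A' r1 -> consistent A' B -> consistent r1 r2 ->
      consistent A (TExt l B r2).

Notation "A ≡ B" := (ty_equiv A B) (at level 70).
Notation "A ≃ B" := (consistent A B) (at level 70).


(* Two facts about equivalence suffice.  First, equivalent types have the same
   head constructor with equivalent immediate components, except that two row
   extensions may differ by permutation.  Second, equivalent rows match every
   label to equivalent fields and equivalent remainders.  An induction on the
   left type then rebuilds consistency rule by rule, using [C_extL] on rows. *)

Definition same_head (A B : ty) : Prop :=
  match A, B with
  | TVar n, TVar m => n = m
  | TName a, TName b => a = b
  | TBase i, TBase j => i = j
  | TDyn, TDyn => True
  | TEmpty, TEmpty => True
  | TArr A1 A2, TArr B1 B2 => A1 ≡ B1 /\ A2 ≡ B2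
  | TForall K A1, TForall K' B1 => K = K' /\ A1 ≡ B1
  | TRec r1, TRec r2 => r1 ≡ r2
  | TVariant r1, TVariant r2 => r1 ≡ r2
  | TExt _ _ _, TExt _ _ _ => True
  | _, _ => False
  end.

Lemma ty_equiv_same_head : forall A B, A ≡ B -> same_head A B.
Proof.
  intros A B HAB; induction HAB; simpl; auto.
  - destruct A; simpl; auto using E_refl.
  - destruct A, B; simpl in *; intuition (subst; auto using E_sym).
  - destruct A, B, C; simpl in *; intuition (subst; eauto using E_trans).
Qed.

Definition row_match_sim (B C : ty) : Prop :=
  forall l B' r, row_match B l B' r ->
    exists C' r', row_match C l C' r' /\ B' ≡ C' /\ r ≡ r'.

Lemma row_match_sim_refl : forall A, row_match_sim A A.
Proof.
  intros A l A' r HM; exists A', r; auto using E_refl.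
Qed.

Lemma row_match_sim_trans : forall A B C,
  row_match_sim A B -> row_match_sim B C -> row_match_sim A C.
Proof.
  intros A B C HAB HBC l A' r HM.
  destruct (HAB _ _ _ HM) as (B' & rB & HMB & EA & Er).
  destruct (HBC _ _ _ HMB) as (C' & rC & HMC & EB & Er').
  exists C', rC; eauto using E_trans.
Qed.

Lemma row_match_sim_ext : forall l A B r1 r2,
  A ≡ B -> r1 ≡ r2 -> row_match_sim r1 r2 ->
  row_match_sim (TExt l A r1) (TExt l B r2).
Proof.
  intros l A B r1 r2 EAB Er12 Hsim l0 X r HM; inversion HM; subst.
  - exists B, r2; auto using RM_here.
  - destruct (Hsim _ _ _ ltac:(eassumption)) as (Y & rY & HMY & EXY & Er).
    exists Y, (TExt l B rY); auto using RM_there, E_ext.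
Qed.

Lemma row_match_sim_swap : forall l l' A B r, l <> l' ->
  row_match_sim (TExt l A (TExt l' B r)) (TExt l' B (TExt l A r)).
Proof.
  intros l l' A B r Hll' l0 X r0 HM.
  repeat match goal with
         | H : row_match (TExt _ _ _) _ _ _ |- _ => inversion H; subst; clear H
         end;
    eexists; eexists; eauto 6 using RM_here, RM_there, E_refl, E_swap.
Qed.

Lemma ty_equiv_row_match_sim : forall A B,
  A ≡ B -> row_match_sim A B /\ row_match_sim B A.
Proof.
  intros A B HAB; induction HAB;
    try (split; intros ? ? ? HM; inversion HM; fail).
  - auto using row_match_sim_refl.
  - tauto.
  - split; eapply row_match_sim_trans; intuition eauto.
  - split; apply row_match_sim_ext; intuition auto using E_sym.
  - auto using row_match_sim_swap.
Qed.

Theorem mainTheorem5 : forall A B : ty, A ≡ B -> A ≃ B.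
Proof.
  induction A; intros C HAC;
    pose proof (ty_equiv_same_head _ _ HAC) as Hhead;
    destruct C; simpl in Hhead; try contradiction;
    try (subst; apply C_refl);
    try (destruct Hhead; subst; constructor; auto; fail);
    try (constructor; auto; fail).
  destruct (proj1 (ty_equiv_row_match_sim _ _ HAC) _ _ _ (RM_here _ _ _))
    as (C' & r & HM & EA & Er).
  eapply C_extL; eauto.
Qed.
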